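(* Let $N\ge1$, $n\ge0$, and let $Q(\alpha_1,\dots,\alpha_N)=\big(\prod_{j=1}^N\alpha_j\big)\sum_{0\le m\le 3n/4}D_m(\alpha)$, where each $D_m=\sum_{m_1+\dots+m_N=m}c^{(m)}_{m_1\dots m_N}\alpha_1^{2m_1}\cdots\alpha_N^{2m_N}$ has rational coefficients and $c^{(m)}_{m_1\dots m_N}\neq0$ only if $m_j\le n-m$ for every $j$. Suppose $Q$ takes integer values whenever all $\alpha_j$ are odd integers. Then $Q$ can be written uniquely as $$Q(\alpha)=\sum_{k_1,\dots,k_N\ge0}C_{k_1\dots k_N}\prod_{j=1}^NP_{k_j}\Big(\frac{\alpha_j-1}2\Big),\qquad C_{k_1\dots k_N}\in\mathbb Z,$$ and $C_{k_1\dots k_N}\neq0$ implies $\lfloor k_j/2\rfloor\le n-\sum_{i=1}^N\lfloor k_i/2\rfloor$ for every $j$.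
   Context: $P_m(\alpha)=\frac{\alpha(\alpha-1)\cdots(\alpha-m+1)}{m!}$ (with $P_0=1$); $\lfloor\cdot\rfloor$ is the integer part. *)

From HB Require Import structures.
From mathcomp Require Import all_boot all_order all_algebra.
From mathcomp Require Import mpoly.
Set Implicit Arguments. Unset Strict Implicit. Unset Printing Implicit Defensive.
Import Order.TTheory GRing.Theory Num.Theory.
Local Open Scope ring_scope.

Definition Pbin (A : lalgType rat) (m : nat) (a : A) : A :=
  (m`!%:R : rat)^-1 *: \prod_(i < m) (a - i%:R).

(* The binomial basis B_k = prod_j P_{k_j}(Y_j), Y_j = (X_j - 1)/2, is stable
   under multiplication by X_j = 2 Y_j + 1 in a triangular way:
   X_j B_k = 2 (k_j + 1) B_{k + e_j} + (2 k_j + 1) B_k.  Hence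
   (prod_j X_j) X^{2 mu} only involves B_k with k_j <= 2 mu_j + 1, which yields
   floor(k_j/2) <= mu_j and the bound on the indices.  At the odd point
   X = 2 t + 1 the polynomial B_k takes the value prod_j C(t_j, k_j), a
   unitriangular matrix in (t, k); inverting it by induction on |k| shows that
   an expansion taking integer values at odd points has integer coefficients,
   and that the expansion is unique. *)

From HB Require Import structures.
From mathcomp Require Import all_boot all_order all_algebra.
From mathcomp Require Import mpoly zify.
Import Order.TTheory GRing.Theory Num.Theory.
Set Implicit Arguments. Unset Strict Implicit. Unset Printing Implicit Defensive.
Local Open Scope ring_scope.

Lemma Pbin_natr (A : lalgType rat) (k t : nat) : Pbin k (t%:R : A) = 'C(t, k)%:R.
Proof.
have prod_ffact : \prod_(i < k) (t%:R - i%:R : A) = (t ^_ k)%:R.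
  elim: k => [|k IH]; first by rewrite big_ord0.
  rewrite big_ord_recr /= IH ffactnSr natrM.
  have [lekt|ltkt] := leqP k t; first by rewrite natrB.
  by rewrite ffact_small // !mul0r.
have natrZ1 m : (m%:R : A) = (m%:R : rat) *: 1 by rewrite scaler_nat.
rewrite /Pbin prod_ffact -bin_ffact natrZ1 [RHS]natrZ1 scalerA natrM mulrCA.
by rewrite mulVf ?mulr1 // pnatr_eq0 -lt0n fact_gt0.
Qed.

Lemma mulr_Pbin (A : comAlgType rat) (m : nat) (a : A) :
  a * Pbin m a = (m.+1%:R : rat) *: Pbin m.+1 a + (m%:R : rat) *: Pbin m a.
Proof.
rewrite /Pbin big_ord_recr /= factS natrM invfM scalerA mulrA mulfV ?mul1r; last first.
  by rewrite pnatr_eq0.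
rewrite -scalerAr (scalerA (m%:R)) [(m%:R : rat) * _]mulrC -scalerA -scalerDr; congr (_ *: _).
by rewrite mulrBr scaler_nat mulr_natr subrK mulrC.
Qed.

Lemma meval_Pbin (N k : nat) (v : 'I_N -> rat) (p : {mpoly rat[N]}) :
  (Pbin k p).@[v] = Pbin k (p.@[v] : rat^o).
Proof.
rewrite mevalZ rmorph_prod; congr (_ * _).
by apply: eq_bigr => i _; rewrite rmorphB rmorph_nat.
Qed.

Section BinomialBasis.
Variable N : nat.
Implicit Types (k t e : 'X_{1..N}) (C : {mpoly rat[N]}).

Definition binomY (j : 'I_N) : {mpoly rat[N]} := (2%:R : rat)^-1 *: ('X_j - 1).

Definition binomB k : {mpoly rat[N]} := \prod_(j < N) Pbin (k j) (binomY j).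

Lemma binomB0 : binomB 0 = 1.
Proof. by rewrite /binomB big1 // => j _; rewrite mnm0E /Pbin big_ord0 invr1 scale1r. Qed.

Lemma X_binomY j : 'X_j = (2%:R : rat) *: binomY j + 1.
Proof. by rewrite /binomY scalerA mulfV ?pnatr_eq0 // scale1r subrK. Qed.

Lemma binomB_mulX k j : binomB k * 'X_j =
  ((2 * (k j).+1)%:R : rat) *: binomB (k + U_(j)) + ((2 * k j).+1%:R : rat) *: binomB k.
Proof.
rewrite /binomB (bigD1 j) // [X in _ = _ *: X + _](bigD1 j) //=.
set R := \prod_(i < N | i != j) Pbin (k i) (binomY i).
have -> : \prod_(i < N | i != j) Pbin ((k + U_(j))%MM i) (binomY i) = R.
  by apply: eq_bigr => i /negbTE ne; rewrite mnmDE mnm1E eq_sym ne addn0.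
rewrite mnmDE mnm1E eqxx addn1 mulrAC !scalerAl -mulrDl; congr (_ * R).
rewrite [X in _ * X]X_binomY mulrDr mulr1 -scalerAr mulrC mulr_Pbin.
set P1 := Pbin (k j).+1 _; set P0 := Pbin (k j) _; clearbody P1 P0.
rewrite scalerDr !scalerA -addrA -{2}[P0]scale1r -scalerDl.
by congr (_ *: _ + _ *: _); [rewrite natrM | rewrite -[(2 * k j).+1%:R]natr1 natrM].
Qed.

Definition odd_point t : 'I_N -> rat := fun j => (2 * t j).+1%:R.

Definition binomw t k : nat := \prod_(j < N) 'C(t j, k j).

Lemma meval_binomB t k : (binomB k).@[odd_point t] = (binomw t k)%:R.
Proof.
rewrite /binomB (big_morph _ (mevalM _) (meval1 _)) natr_prod; apply: eq_bigr => j _.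
rewrite meval_Pbin /binomY mevalZ mevalB mevalXU meval1 /odd_point.
by rewrite -[(2 * t j).+1%:R]natr1 addrK natrM mulKf ?pnatr_eq0 // Pbin_natr.
Qed.

Lemma binomw_diag k : binomw k k = 1%N.
Proof. by rewrite /binomw big1 // => j _; rewrite binn. Qed.

Lemma binomw_neq0 t k : binomw t k != 0%N -> (k <= t)%MM.
Proof.
move=> nz; apply/mnm_lepP => i; rewrite -bin_gt0 lt0n; apply: contra nz => /eqP z.
by rewrite /binomw (bigD1 i) //= z.
Qed.

Lemma lepm_mdeg_lt k' k : (k' <= k)%MM -> k' != k -> (mdeg k' < mdeg k)%N.
Proof.
move=> le ne; rewrite -(submK le) mdegD -[X in (X < _)%N]add0n ltn_add2r lt0n mdeg_eq0.
by apply: contra ne => /eqP d; rewrite -(submK le) d add0m.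
Qed.

(* Newton interpolation on the lattice of points [odd_point t]: the matrix
   [binomw t k] is unitriangular for the componentwise order, so coefficients
   are recovered from values by induction on the degree of [k]. *)
Lemma binomw_coef_closed (V : zmodType) (S : {pred V}) (s : seq 'X_{1..N})
    (d : 'X_{1..N} -> V) :
  zmod_closed S -> uniq s -> (forall t, \sum_(k <- s) d k *+ binomw t k \in S) ->
  {in s, forall k, d k \in S}.
Proof.
move=> S_zmod us hS; have [S0 SD] := GRing.zmod_closedD S_zmod.
have SMn x m : x \in S -> x *+ m \in S.
  by move=> Sx; elim: m => [|m IH]; rewrite ?mulr0n // mulrS SD.
suff sized q k : mdeg k = q -> k \in s -> d k \in S by move=> k; apply: sized.
elim/ltn_ind: q k => q IH k dk ks.
have := hS k; rewrite (bigD1_seq k) //= binomw_diag mulr1n.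
set T := \sum_(k' <- s | k' != k) _ => hT.
suff ST : T \in S by rewrite -(addrK T (d k)); apply: S_zmod.2.
rewrite /T big_seq_cond; apply: (big_ind (fun x => x \in S)) => // k' /andP[k's ne].
have [->|nz] := eqVneq (binomw k k') 0%N; first by rewrite mulr0n.
apply/SMn/(IH (mdeg k')) => //; rewrite -dk.
by apply: lepm_mdeg_lt => //; apply: binomw_neq0.
Qed.

Definition binom_expand C : {mpoly rat[N]} := \sum_(k <- msupp C) C@_k *: binomB k.

Lemma binom_expandE C r : uniq r -> {subset msupp C <= r} ->
  binom_expand C = \sum_(k <- r) C@_k *: binomB k.
Proof.
move=> ur sCr; rewrite [RHS](bigID (mem (msupp C))) /=.
rewrite [X in _ = _ + X]big1 ?addr0 => [|k /memN_msupp_eq0 ->]; last by rewrite scale0r.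
rewrite -big_filter; apply/perm_big/uniq_perm; rewrite ?filter_uniq ?msupp_uniq //.
by move=> k; rewrite mem_filter andb_idr //; apply: sCr.
Qed.

Lemma binom_expand_is_linear : linear binom_expand.
Proof.
move=> a C1 C2; set r := undup (msupp C1 ++ msupp C2).
have sub1 : {subset msupp C1 <= r} by move=> k kC; rewrite mem_undup mem_cat kC.
have sub2 : {subset msupp C2 <= r} by move=> k kC; rewrite mem_undup mem_cat kC orbT.
have subD : {subset msupp (a *: C1 + C2) <= r}.
  by move=> k /msuppD_le; rewrite mem_cat => /orP[/msuppZ_le/sub1|/sub2].
rewrite !(@binom_expandE _ r) ?undup_uniq // scaler_sumr -big_split.
by apply: eq_bigr => k _; rewrite mcoeffD mcoeffZ scalerDl scalerA.
Qed.

HB.instance Definition _ := GRing.isLinear.Build rat {mpoly rat[N]} {mpoly rat[N]}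
  *:%R binom_expand binom_expand_is_linear.

Lemma binom_expandX k : binom_expand 'X_[k] = binomB k.
Proof. by rewrite /binom_expand msuppX big_seq1 mcoeffX eqxx scale1r. Qed.

Lemma meval_binom_expand C t :
  (binom_expand C).@[odd_point t] = \sum_(k <- msupp C) C@_k *+ binomw t k.
Proof.
rewrite (big_morph _ (mevalD _) (meval0 _)); apply: eq_bigr => k _.
by rewrite mevalZ meval_binomB mulr_natr.
Qed.

Lemma binom_expand_inj : injective binom_expand.
Proof.
move=> C1 C2 e; apply/subr0_eq.
have : binom_expand (C1 - C2) = 0 by rewrite linearB /= e subrr.
move: (C1 - C2) => C C0.
apply/mpolyP => k; rewrite mcoeff0.
have [kC|/memN_msupp_eq0 //] := boolP (k \in msupp C).
have zero_closed : zmod_closed (pred1 0 : {pred rat}).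
  by split=> [|x y /eqP-> /eqP->]; rewrite inE ?subr0.
suff /(_ k kC) : {in msupp C, forall k, C@_k \in pred1 0} by rewrite inE => /eqP.
apply: (@binomw_coef_closed _ _ _ (fun k => C@_k) zero_closed (msupp_uniq C)) => t.
by rewrite -meval_binom_expand C0 meval0 inE.
Qed.

Definition expandable (A : {pred 'X_{1..N}}) (p : {mpoly rat[N]}) :=
  exists2 C, {subset msupp C <= A} & p = binom_expand C.

Lemma expandable_sum A (I : Type) (r : seq I) (P : pred I) (F : I -> {mpoly rat[N]}) :
  (forall i, P i -> expandable A (F i)) -> expandable A (\sum_(i <- r | P i) F i).
Proof.
move=> hF; apply: big_ind => //; first by exists 0; rewrite ?msupp0 ?linear0.
move=> _ _ [C1 s1 ->] [C2 s2 ->]; exists (C1 + C2); last by rewrite linearD.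
by move=> k /msuppD_le; rewrite mem_cat => /orP[/s1|/s2].
Qed.

Lemma expandableZ A c p : expandable A p -> expandable A (c *: p).
Proof. by case=> C sC ->; exists (c *: C); [move=> k /msuppZ_le/sC | rewrite linearZ]. Qed.

Lemma expandable_sub A A' p : {subset A <= A'} -> expandable A p -> expandable A' p.
Proof. by move=> sA [C sC ->]; exists C => // k /sC/sA. Qed.

Lemma expandable_mulX b j p :
  expandable [pred k | k <= b]%MM p -> expandable [pred k | k <= b + U_(j)]%MM (p * 'X_j).
Proof.
case=> C sC ->; exists (\sum_(k <- msupp C) C@_k *:
    (((2 * (k j).+1)%:R : rat) *: 'X_[k + U_(j)] + ((2 * k j).+1%:R : rat) *: 'X_[k])).
  move=> k' /msupp_sum_le/flattenP[s /mapP[k]]; rewrite filter_predT => kC ->.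
  move=> /msuppZ_le /msuppD_le.
  have lekb : (k <= b)%MM := sC _ kC; rewrite mem_cat.
  case/orP=> /msuppZ_le; rewrite msuppX inE => /eqP->.
    by apply/mnm_lepP => i; rewrite !mnmDE leq_add2r (mnm_lepP lekb).
  exact: lepm_trans lekb (lem_addr _ _).
rewrite linear_sum mulr_suml; apply: eq_bigr => k _.
by rewrite linearZ linearD !linearZ /= !binom_expandX -binomB_mulX scalerAl.
Qed.

Lemma expandable_X e : expandable [pred k | k <= e]%MM 'X_[e].
Proof.
move: {2}(mdeg e) (erefl (mdeg e)) => d; elim: d e => [|d IH] e de.
  move/eqP: de; rewrite mdeg_eq0 => /eqP->; exists 'X_[0]; last first.
    by rewrite binom_expandX binomB0 mpolyX0.
  by move=> k; rewrite msuppX inE => /eqP->; apply: lepm_refl.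
have [j ej] : exists j, e j != 0%N.
  case: (pickP (fun i => e i != 0%N)) => [j ej|e0]; first by exists j.
  by move: de; rewrite mdegE big1 // => i _; apply/eqP/negbFE; apply: e0.
have leUe : (U_(j) <= e)%MM by rewrite lep1mP.
have dB : mdeg (e - U_(j)) = d.
  by move: (mdegD (e - U_(j)) U_(j)); rewrite submK // mdeg1 addn1 de => -[].
rewrite -(submK leUe) mpolyXD; exact: expandable_mulX (IH _ dB).
Qed.

Lemma expandable_prodX_monomial e :
  expandable [pred k : 'X_{1..N} | [forall i, k i <= (e i).+1]%N]
    (\prod_(j < N) 'X_j * 'X_[e]).
Proof.
set e1 := [multinom (e i).+1 | i < N].
have -> : \prod_(j < N) 'X_j * 'X_[e] = 'X_[e1] :> {mpoly rat[N]}.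
  by rewrite !mpolyXE_id -big_split; apply: eq_bigr => j _; rewrite mnmE exprS.
apply: expandable_sub (expandable_X e1) => k /mnm_lepP le; apply/forallP => i.
by have := le i; rewrite mnmE.
Qed.

Lemma binom_expand_map_intr (C : {mpoly int[N]}) :
  binom_expand (map_mpoly intr C) = \sum_(k <- msupp C) (C@_k)%:~R *: binomB k.
Proof.
rewrite (binom_expandE (msupp_uniq C)); last first.
  by move=> k; rewrite (perm_mem (msupp_map_mpoly _ (@intr_inj _))).
by apply: eq_bigr => k _; rewrite mcoeff_map_mpoly.
Qed.

Lemma map_mpoly_intr_inj :
  injective (map_mpoly (intr : int -> rat) : {mpoly int[N]} -> _).
Proof.
move=> C1 C2 e; apply/mpolyP => k; apply: (@intr_inj rat).
by rewrite -!mcoeff_map_mpoly e.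
Qed.

Lemma int_coef_binom_expand (Cr : {mpoly rat[N]}) :
  (forall t, (binom_expand Cr).@[odd_point t] \is a Num.int) ->
  exists C : {mpoly int[N]}, Cr = map_mpoly intr C.
Proof.
move=> hZ.
have Cr_int : {in msupp Cr, forall k, Cr@_k \is a Num.int}.
  apply: (@binomw_coef_closed _ _ _ (fun k => Cr@_k) _ (msupp_uniq Cr)) => [|t].
    by split=> [|x y]; [exact: rpred0 | exact: rpredB].
  by rewrite -meval_binom_expand.
exists (\sum_(k <- msupp Cr) Num.floor (Cr@_k) *: 'X_[k]).
rewrite raddf_sum {1}[Cr]mpolyE; apply: eq_big_seq => k kCr /=.
by rewrite map_mpolyZ map_mpolyX; congr (_ *: _); rewrite [RHS]floorK ?Cr_int.
Qed.

End BinomialBasis.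

Definition half_bounded (N n : nat) : {pred 'X_{1..N}} :=
  [pred k : 'X_{1..N} | [forall j, (k j)./2 + \sum_(i < N) (k i)./2 <= n]%N].

Lemma half_bounded_of_le (N n m : nat) (mm k : 'X_{1..N}) :
  (m <= n)%N -> mdeg mm = m -> (forall j, mm j <= n - m)%N ->
  [forall i, k i <= ((mm + mm)%MM i).+1]%N -> k \in half_bounded n.
Proof.
move=> lemn dmm lemm /forallP lek; apply/forallP => j.
have half_le i : ((k i)./2 <= mm i)%N by have := lek i; rewrite mnmDE; lia.
have : (\sum_(i < N) (k i)./2 <= m)%N by rewrite -dmm mdegE; apply: leq_sum => i _.
by have := half_le j; have := lemm j; lia.
Qed.

Theorem mainTheorem2 (N n : nat) (hN : (1 <= N)%N)
  (D : nat -> {mpoly rat[N]}) (Q : {mpoly rat[N]})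
  (hQ : Q = (\prod_(j < N) 'X_j) * \sum_(0 <= m < n.+1 | (4 * m <= 3 * n)%N) D m)
  (hD : forall (m : nat) (mono : 'X_{1..N}), mono \in msupp (D m) ->
          exists mm : 'X_{1..N},
            [/\ mono = (mm + mm)%MM, mdeg mm = m & forall j : 'I_N, (mm j <= n - m)%N])
  (hint : forall x : 'I_N -> int, (forall j, ~~ (2 %| x j)%Z) ->
          exists z : int, Q.@[fun j => (x j)%:~R] = z%:~R) :
  let repr (C : {mpoly int[N]}) :=
    Q = \sum_(k <- msupp C)
          ((C@_k)%:~R : rat) *: \prod_(j < N) Pbin (k j) ((2%:R : rat)^-1 *: ('X_j - 1)) in
  (exists! C : {mpoly int[N]}, repr C) /\
  (forall C : {mpoly int[N]}, repr C ->
     forall k : 'X_{1..N}, k \in msupp C ->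
       forall j : 'I_N, ((k j)./2 + \sum_(i < N) (k i)./2 <= n)%N).
Proof.
move=> repr.
have [Cr sCr QE] : expandable (half_bounded n) Q.
  rewrite hQ mulr_sumr big_seq_cond; apply: expandable_sum => m /andP[].
  rewrite mem_index_iota ltnS => /andP[_ lemn] _.
  rewrite [D m]mpolyE mulr_sumr big_seq; apply: expandable_sum => mono hmono.
  rewrite -scalerAr; apply/expandableZ.
  apply: expandable_sub (expandable_prodX_monomial mono).
  have [mm [-> dmm lemm]] := hD m mono hmono.
  by move=> k; apply: half_bounded_of_le lemn dmm lemm.
have [C CrE] : exists C : {mpoly int[N]}, Cr = map_mpoly intr C.
  apply: int_coef_binom_expand => t; rewrite -QE.
  have [|z Qz] := hint (fun j => (2 * t j).+1%:Z).
    by move=> j; rewrite dvdzE /= dvdn2 /= oddM.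
  suff -> : Q.@[odd_point t] = z%:~R by rewrite intr_int.
  exact: Qz.
have reprE C' : repr C' <-> C' = C.
  have -> : repr C' = (Q = binom_expand (map_mpoly intr C')).
    by rewrite binom_expand_map_intr.
  by rewrite QE CrE; split=> [/binom_expand_inj/map_mpoly_intr_inj|->].
split; first by exists C; split=> [|C' /reprE]; first exact/reprE.
move=> C' /reprE -> k kC.
have : k \in msupp Cr by rewrite CrE (perm_mem (msupp_map_mpoly _ (@intr_inj _))).
by move/sCr/forallP.
Qed.
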